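(* Let $n$ be a prime and let $g_1,g_2$ be two generators of $U(\mathbb Z/n\mathbb Z)$. Let $C$ be a circulant matrix of order $n$ and set $A=Q_{g_1}C$ and $B=Q_{g_2}C$ (a $g_1$-circulant and a $g_2$-circulant matrix, respectively). Then $A$ and $B$ have the same eigenvalues. In particular, if $g_1^{-1}$ denotes the inverse of $g_1$ modulo $n$, then $Q_{g_1}C$ and $Q_{g_1^{-1}}C$ have the same eigenvalues.
   Context: $Q_h$ is the $n\times n$ permutation matrix whose $(i,j)$ entry is $1$ if $j\equiv 1+(i-1)h\pmod n$ (indices in $\{1,\dots,n\}$) and $0$ otherwise. A circulant matrix $circ(c_1,\dots,c_n)$ has $(i,j)$ entry $c_{j-i+1}$ (subscripts mod $n$); an $h$-circulant matrix is one in which each row is the preceding row cyclically shifted $h$ places to the right. *)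

From HB Require Import structures.
From mathcomp Require Import all_boot all_order all_algebra all_field.
Set Implicit Arguments. Unset Strict Implicit. Unset Printing Implicit Defensive.
Import GRing.Theory Num.Theory.
Local Open Scope ring_scope.

(* Indices are 0-based: row/column i : 'I_n corresponds to index i+1 of the paper. *)

Lemma ord_pos n (i : 'I_n) : (0 < n)%N.
Proof. exact: (leq_ltn_trans (leq0n i) (ltn_ord i)). Qed.

(* Q_h : (i,j) entry (1-based) is 1 iff j = 1 + (i-1) h mod n;
   0-based: j = i * h mod n. *)
Definition Qmx (R : nzRingType) (n h : nat) : 'M[R]_n :=
  \matrix_(i < n, j < n) ((nat_of_ord j == (i * h) %% n)%N)%:R.

(* circ(c_1,...,c_n): (i,j) entry c_{j-i+1} (1-based, mod n);
   0-based with c : 'I_n -> R (c k = c_{k+1}): entry c ((j - i) mod n). *)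
Definition circ (R : nzRingType) (n : nat) (c : 'I_n -> R) : 'M[R]_n :=
  \matrix_(i < n, j < n) c (Ordinal (ltn_pmod (j + n - i) (ord_pos i))).

Definition unit_generator (n g : nat) : bool :=
  coprime g n &&
  [forall u : 'I_n, coprime u n ==> [exists k : 'I_n, (g ^ k %% n == u)%N]].

From HB Require Import structures.
From mathcomp Require Import all_boot all_order all_algebra all_field.
From mathcomp Require Import fingroup perm cyclic.
Set Implicit Arguments. Unset Strict Implicit. Unset Printing Implicit Defensive.
Import GRing.Theory.
Local Open Scope ring_scope.

(* The Fourier matrix F = (w^(ij)) of a primitive n-th root of unity w satisfies
   C F = F D for every circulant C, where D is the diagonal matrix of the
   eigenvalues lambda_l = sum_k c_k w^(kl) of C, and Q_h F = F Q_h^T. Hence Q_h C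
   is similar to Q_h^T D, the transpose of D Q_h. The matrix D Q_h is a weighted
   permutation matrix for i |-> i h mod n; when h generates U(Z/nZ) this
   permutation fixes 0 and runs through the n - 1 nonzero residues in the single
   cycle 1 -> h -> h^2 -> ..., so the characteristic polynomial of D Q_h is
   (X - lambda_0) (X^(n-1) - prod_(i <> 0) lambda_i), whatever the generator h.
   Finally, the inverse of a generator is again a generator. *)

Lemma char_poly_trmx (R : comNzRingType) n (A : 'M[R]_n) :
  char_poly A^T = char_poly A.
Proof.
rewrite /char_poly -det_tr; congr (\det _).
by apply/matrixP => i j; rewrite !mxE eq_sym.
Qed.

Lemma char_poly_similar (F : fieldType) n (P A B : 'M[F]_n) :
  P \in unitmx -> A *m P = P *m B -> char_poly A = char_poly B.
Proof.
move=> P_unit AP_PB; pose Px := map_mx (@polyC F) P.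
have : char_poly_mx A *m Px = Px *m char_poly_mx B.
  by rewrite mulmxBl mulmxBr -!map_mxM AP_PB mul_scalar_mx mul_mx_scalar.
move/(congr1 determinant); rewrite !det_mulmx mulrC => /mulfI; apply.
by rewrite det_map_mx polyC_eq0 -unitfE -unitmxE.
Qed.

Lemma char_poly_perm_conj (R : comNzRingType) n (s : 'S_n) (A : 'M[R]_n) :
  char_poly (\matrix_(i, j) A (s i) (s j)) = char_poly A.
Proof.
have conjE T (B : 'M[T]_n) : \matrix_(i, j) B (s i) (s j) = row_perm s (col_perm s B).
  by apply/matrixP => i j; rewrite !mxE.
rewrite /char_poly.
have -> : char_poly_mx (\matrix_(i, j) A (s i) (s j))
          = row_perm s (col_perm s (char_poly_mx A)).
  by rewrite -conjE; apply/matrixP => i j; rewrite !mxE (inj_eq perm_inj).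
rewrite row_permE col_permE !det_mulmx mulrCA -det_mulmx -perm_mxM.
by rewrite mulgV perm_mx1 det1 mulr1.
Qed.

Lemma char_poly_row0 (R : comNzRingType) n (A : 'M[R]_n.+1) :
  (forall j, j != 0 -> A 0 j = 0) ->
  char_poly A = ('X - (A 0 0)%:P) * char_poly (row' 0 (col' 0 A)).
Proof.
move=> A0.
rewrite /char_poly (expand_det_row _ 0) big_ord_recl big1 ?addr0 => [|j _].
  by rewrite !mxE eqxx /cofactor row'_col'_char_poly_mx addn0 expr0 mul1r.
by rewrite !mxE A0 // mulr0n subr0 mul0r.
Qed.

Definition weighted_cycle_mx (R : nzRingType) m (w : 'I_m -> R) : 'M[R]_m :=
  \matrix_(s, t) (w s *+ (nat_of_ord t == s.+1 %% m)%N).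

Lemma eqSn_modSS a d (i : 'I_d) :
  (a.+1 == i.+2 %% d.+1)%N = (a == i.+1)%N && (i.+1 < d)%N.
Proof.
have [lt_id | ] := ltnP i.+1 d; first by rewrite modn_small ?eqSS ?andbT.
move=> le_di; have -> : i.+2 = d.+1 by congr _.+1; apply/eqP; rewrite eqn_leq le_di ltn_ord.
by rewrite modnn andbF.
Qed.

Lemma det_scalar_sub_weighted_cycle (R : comNzRingType) m (x : R) (w : 'I_m.+1 -> R) :
  \det (x%:M - weighted_cycle_mx w) = x ^+ m.+1 - \prod_s w s.
Proof.
case: m w => [|m] w; first by rewrite det_mx11 !mxE big_ord1 modnn.
set A := _ - _.
have AE s t : A s t = x *+ (s == t) - w s *+ (nat_of_ord t == s.+1 %% m.+2)%N.
  by rewrite !mxE.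
clearbody A.
have top_minor : \det (row' 0 (col' 0 A)) = x ^+ m.+1.
  rewrite -det_tr det_trig; last first.
    apply/is_trig_mxP => s t lt_st; rewrite !mxE AE -val_eqE !lift0 eqSS eqSn_modSS.
    have lt_sSt : (s < t.+1)%N by rewrite ltnS ltnW.
    by rewrite (gtn_eqF lt_st) (ltn_eqF lt_sSt) mulr0n subr0.
  rewrite -[in RHS](card_ord m.+1) -prodr_const; apply: eq_bigr => s _.
  by rewrite !mxE AE eqxx lift0 eqSn_modSS ltn_eqF // subr0.
have bottom_minor :
    \det (row' ord_max (col' 0 A)) = \prod_(s < m.+1) - w (widen_ord (leqnSn _) s).
  have liftE (s : 'I_m.+1) : lift ord_max s = widen_ord (leqnSn _) s.
    by apply: val_inj; rewrite /= /bump leqNgt ltn_ord.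
  have wrapE (s t : 'I_m.+1) : (lift 0 t == (s.+1 %% m.+2)%N :> nat) = (t == s :> nat).
    by rewrite lift0 modn_small ?eqSS // ltnS.
  rewrite det_trig; last first.
    apply/is_trig_mxP => s t lt_st; rewrite !mxE liftE AE wrapE (gtn_eqF lt_st).
    have lt_sSt : (s < t.+1)%N by rewrite ltnS ltnW.
    by rewrite -val_eqE /= /bump add1n (ltn_eqF lt_sSt) subr0.
  apply: eq_bigr => s _; rewrite !mxE liftE AE wrapE eqxx -val_eqE /= /bump add1n.
  by rewrite (ltn_eqF (ltnSn s)) mulr0n sub0r.
(* Along column 0 only rows 0 and m.+1 are nonzero, and both minors are triangular. *)
rewrite (expand_det_col _ 0) big_ord_recl big_ord_recr /= big1 ?add0r => [|i _]; last first.
  have lt_i : ((lift ord0 (widen_ord (leqnSn m) i)).+1 < m.+2)%N by rewrite lift0 /= !ltnS.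
  by rewrite AE lift_eqF (modn_small lt_i) /= !mulr0n subr0 mul0r.
rewrite !AE /= modnn !mulr0n subr0 sub0r /cofactor top_minor bottom_minor prodrN.
have -> : lift ord0 (ord_max : 'I_m.+1) = ord_max by apply: val_inj.
rewrite [in RHS]big_ord_recr /= addn0 expr0 mul1r mulr1n -exprS.
rewrite [_ ^+ _ * (_ ^+ _ * _)]mulrA -exprD cardT size_enum_ord addn0.
rewrite -signr_odd oddD addbb mul1r.
by rewrite mulr1n mulNr mulrC.
Qed.

Lemma char_poly_weighted_cycle (R : comNzRingType) m (w : 'I_m.+1 -> R) :
  char_poly (weighted_cycle_mx w) = 'X ^+ m.+1 - (\prod_s w s)%:P.
Proof.
rewrite /char_poly /char_poly_mx.
have -> : map_mx polyC (weighted_cycle_mx w) = weighted_cycle_mx (fun s => (w s)%:P).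
  by apply/matrixP => s t; rewrite !mxE polyCMn.
by rewrite det_scalar_sub_weighted_cycle rmorph_prod.
Qed.

Lemma sum_mul_eq_natr (R : nzRingType) n (F : 'I_n -> R) a (lt_an : (a < n)%N) :
  \sum_(j < n) F j * (nat_of_ord j == a)%:R = F (Ordinal lt_an).
Proof.
rewrite (bigD1 (Ordinal lt_an)) //= eqxx mulr1 big1 ?addr0 // => j.
by rewrite -val_eqE /= => /negPf->; rewrite mulr0.
Qed.

Lemma modnDKr n k i : (k < n)%N -> (i <= n)%N -> (((k + i) %% n + n - i) %% n = k)%N.
Proof.
move=> lt_kn le_in; rewrite -addnBA // modnDml.
by rewrite -addnA subnKC // modnDr modn_small.
Qed.

Lemma modnBKr n j i : (j < n)%N -> (i <= n)%N -> (((j + n - i) %% n + i) %% n = j)%N.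
Proof.
move=> lt_jn le_in; rewrite modnDml subnK ?modnDr ?modn_small //.
exact: leq_trans le_in (leq_addl _ _).
Qed.

Section FourierDiagonalization.
Variables (F : fieldType) (n : nat) (w : F).
Hypothesis w_prim : n.-primitive_root w.

Definition fourier_mx : 'M[F]_n := \matrix_(i, j) w ^+ (i * j).

Definition circ_eigenvalue (c : 'I_n -> F) (l : nat) : F :=
  \sum_(k < n) c k * w ^+ (k * l).

Lemma fourier_mx_unit : fourier_mx \in unitmx.
Proof.
have -> : fourier_mx = Vandermonde n (\row_(j < n) w ^+ j).
  by apply/matrixP => i j; rewrite !mxE -exprM mulnC.
rewrite unitmxE unitfE det_Vandermonde.
apply/prodf_neq0 => i _; apply/prodf_neq0 => j lt_ij.
by rewrite !mxE subr_eq0 (eq_prim_root_expr w_prim) !modn_small // gtn_eqF.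
Qed.

Lemma Qmx_fourier h : Qmx F n h *m fourier_mx = fourier_mx *m (Qmx F n h)^T.
Proof.
apply/matrixP => i l; have n_gt0 := ord_pos i; rewrite !mxE.
under eq_bigr do rewrite !mxE mulrC.
rewrite (sum_mul_eq_natr _ (ltn_pmod _ n_gt0)).
under eq_bigr do rewrite !mxE.
rewrite (sum_mul_eq_natr _ (ltn_pmod _ n_gt0)) /=.
rewrite -(prim_expr_mod w_prim) modnMml -[RHS](prim_expr_mod w_prim) modnMmr.
by rewrite mulnAC mulnA.
Qed.

Lemma circ_fourier c :
  circ c *m fourier_mx = fourier_mx *m diag_mx (\row_l circ_eigenvalue c l).
Proof.
apply/matrixP => i l; have n_gt0 := ord_pos i.
rewrite mul_mx_diag !mxE /circ_eigenvalue mulr_sumr.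
pose shift (k : 'I_n) : 'I_n := Ordinal (ltn_pmod (k + i) n_gt0).
pose unshift (k : 'I_n) : 'I_n := Ordinal (ltn_pmod (k + n - i) n_gt0).
have shiftK : cancel shift unshift by move=> k; apply: val_inj; rewrite /= modnDKr // ltnW.
have unshiftK : cancel unshift shift by move=> k; apply: val_inj; rewrite /= modnBKr // ltnW.
rewrite (reindex shift); last by exists unshift => k _.
apply: eq_bigr => k _; rewrite !mxE.
have -> : Ordinal (ltn_pmod (shift k + n - i) (ord_pos i)) = k.
  by apply: val_inj; rewrite /= modnDKr // ltnW.
rewrite /= -(prim_expr_mod w_prim) modnMml prim_expr_mod // mulnDl exprD.
by rewrite mulrA mulrC.
Qed.

Lemma char_poly_Qmx_circ h c :
  char_poly (Qmx F n h *m circ c)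
  = char_poly (diag_mx (\row_l circ_eigenvalue c l) *m Qmx F n h).
Proof.
set D := diag_mx _.
rewrite (char_poly_similar fourier_mx_unit (B := (Qmx F n h)^T *m D)).
  by rewrite -char_poly_trmx trmx_mul trmxK tr_diag_mx.
by rewrite -mulmxA circ_fourier !mulmxA Qmx_fourier.
Qed.

End FourierDiagonalization.

Section UnitGenerator.
Variables (k h : nat).
Local Notation n := k.+2.
Hypotheses (n_prime : prime n) (h_gen : unit_generator n h).

Lemma unit_generator_coprime : coprime h n.
Proof. by case/andP: h_gen. Qed.

Lemma unit_generator_order : (h ^ k.+1 %% n = 1)%N.
Proof. by have := Euler_exp_totient unit_generator_coprime; rewrite totient_prime. Qed.

Lemma expn_mod_order m : (h ^ m %% n = h ^ (m %% k.+1) %% n)%N.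
Proof.
rewrite {1}(divn_eq m k.+1) expnD [(_ * k.+1)%N]mulnC expnM -modnMml -modnXm.
by rewrite unit_generator_order exp1n (@modn_small 1) ?mul1n.
Qed.

Lemma expn_mod_gt0 t : (0 < h ^ t %% n)%N.
Proof.
rewrite lt0n; apply: contraTneq (coprimeXl t unit_generator_coprime) => h_t0.
by rewrite -coprime_modl h_t0 /coprime gcd0n.
Qed.

Definition gen_pow (t : 'I_k.+1) : 'I_k.+1 := inord (h ^ t %% n).-1.

Lemma gen_powS t : (gen_pow t).+1 = (h ^ t %% n)%N.
Proof.
have lt_pred : ((h ^ t %% n).-1 < k.+1)%N.
  by rewrite -ltnS prednK ?expn_mod_gt0 // ltn_pmod.
by rewrite inordK // prednK ?expn_mod_gt0.
Qed.

Lemma gen_pow_surj s : exists t, gen_pow t = s.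
Proof.
have lt_Ss : (s.+1 < n)%N by rewrite ltnS.
have : coprime (Ordinal lt_Ss) n by rewrite coprime_sym prime_coprime // gtnNdvd.
case/andP: h_gen => _ /forallP/(_ (Ordinal lt_Ss))/implyP/[apply]/existsP[t /eqP /= h_t].
have [lt_t | ] := ltnP t k.+1.
  by exists (Ordinal lt_t); apply: val_inj; rewrite /gen_pow /= h_t inordK.
move=> le_kt; have def_t : nat_of_ord t = k.+1.
  by apply/eqP; rewrite eqn_leq le_kt -ltnS ltn_ord.
move: h_t; rewrite def_t unit_generator_order => -[s_0].
by exists ord0; apply: val_inj; rewrite /gen_pow expn0 (@modn_small 1) //= inordK.
Qed.

Lemma gen_pow_inj : injective gen_pow.
Proof.
have /image_injP gen_pow_injT : #|image gen_pow 'I_k.+1| == #|'I_k.+1|.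
  rewrite eqn_leq leq_image_card; apply/subset_leq_card/subsetP => s _.
  by have [t <-] := gen_pow_surj s; apply: image_f.
by move=> a b; apply: gen_pow_injT.
Qed.

Lemma eq_expn_mod a b : (a < k.+1)%N -> (b < k.+1)%N ->
  (h ^ a %% n == h ^ b %% n)%N = (a == b).
Proof.
move=> lt_a lt_b; rewrite -(gen_powS (Ordinal lt_a)) -(gen_powS (Ordinal lt_b)) eqSS.
by rewrite val_eqE (inj_eq gen_pow_inj) -val_eqE.
Qed.

Lemma char_poly_diag_mul_Qmx (R : comNzRingType) (d : 'rV[R]_n) :
  char_poly (diag_mx d *m Qmx R n h)
  = ('X - (d 0 0)%:P) * ('X ^+ k.+1 - (\prod_(s < k.+1) d 0 (lift 0 s))%:P).
Proof.
set M := diag_mx d *m Qmx R n h.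
have ME i j : M i j = d 0 i * (nat_of_ord j == i * h %% n)%N%:R.
  by rewrite /M mul_diag_mx !mxE.
clearbody M; rewrite char_poly_row0 => [|j nz_j]; last first.
  by rewrite ME mul0n mod0n; move: nz_j; rewrite -val_eqE /= => /negPf->; rewrite mulr0.
rewrite ME mul0n mod0n eqxx mulr1; congr (_ * _).
rewrite -(char_poly_perm_conj (perm gen_pow_inj)).
have -> : \matrix_(s, t) row' 0 (col' 0 M) (perm gen_pow_inj s) (perm gen_pow_inj t)
          = weighted_cycle_mx (fun s => d 0 (lift 0 (gen_pow s))).
  apply/matrixP => s t; rewrite !mxE !permE ME !lift0 !gen_powS modnMml -expnSr.
  by rewrite (expn_mod_order s.+1) eq_expn_mod ?ltn_mod ?ltn_ord // mulr_natr.
rewrite char_poly_weighted_cycle.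
by rewrite [in RHS](reindex_inj gen_pow_inj).
Qed.

Lemma unit_generator_inv h' : (h * h' = 1 %[mod n])%N -> unit_generator n h'.
Proof.
move=> hh'1; have h'h1 : (h' * h %% n = 1)%N by rewrite mulnC hh'1 (@modn_small 1).
apply/andP; split.
  have : coprime (h' * h) n by rewrite -coprime_modl h'h1 /coprime gcd1n.
  by rewrite coprimeMl => /andP[].
apply/forallP => u; apply/implyP => u_coprime.
case/andP: h_gen => _ /forallP/(_ u)/implyP/(_ u_coprime)/existsP[t /eqP h_t].
set r := (t %% k.+1)%N; have le_r : (r <= k.+1)%N by rewrite ltnW // ltn_mod.
have lt_t' : (k.+1 - r < n)%N by rewrite ltnS leq_subr.
apply/existsP; exists (Ordinal lt_t'); apply/eqP => /=.
have hrt' : (h ^ r * h ^ (k.+1 - r) %% n = 1)%N.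
  by rewrite -expnD subnKC // unit_generator_order.
have h'ht' : ((h' * h) ^ (k.+1 - r) %% n = 1)%N by rewrite -modnXm h'h1 exp1n.
rewrite -[(h' ^ _)%N]muln1 -hrt' modnMmr mulnCA -expnMn -modnMmr h'ht' muln1.
by rewrite -expn_mod_order h_t.
Qed.

End UnitGenerator.

Theorem mainTheorem7 (n g1 g2 : nat) (c : 'I_n -> algC) :
  prime n -> unit_generator n g1 -> unit_generator n g2 ->
  char_poly (Qmx algC n g1 *m circ c) = char_poly (Qmx algC n g2 *m circ c)
  /\ (forall g1inv : nat, (g1 * g1inv = 1 %[mod n])%N ->
       char_poly (Qmx algC n g1 *m circ c)
       = char_poly (Qmx algC n g1inv *m circ c)).
Proof.
case: n c => [|[|k]] c n_prime //= g1_gen g2_gen.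
have [w w_prim] := C_prim_root_exists (isT : (0 < k.+2)%N).
have char_polyE g : unit_generator k.+2 g ->
    char_poly (Qmx algC _ g *m circ c)
    = ('X - (circ_eigenvalue w c 0)%:P)
      * ('X ^+ k.+1 - (\prod_(s < k.+1) circ_eigenvalue w c (lift 0 s))%:P).
  move=> g_gen; rewrite (char_poly_Qmx_circ w_prim) char_poly_diag_mul_Qmx // mxE.
  by under eq_bigr do rewrite mxE.
split=> [|g1inv g1g1inv]; first by rewrite !char_polyE.
by rewrite !char_polyE // (unit_generator_inv n_prime g1_gen g1g1inv).
Qed.
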